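(* In the setting of the addition algorithm, the maps $T^+:\mathbb{R}^V\to\mathbb{R}^V$ and $T^-:\mathbb{R}^V\to\mathbb{R}^V$ are one-to-one and onto. Moreover $T^-(\varphi)=-T^+(-\varphi)$ for all $\varphi\in\mathbb{R}^V$.
   Context: Addition algorithm. Let $G=(V,E)$ be a finite connected graph ($v\sim w$ means $(v,w)\in E$), $\tau:V\to[0,\infty)$, $0<\varepsilon\le1/2$, and fix a total order $\preceq$ on $V$. Let $f:\mathbb{R}\to\mathbb{R}$ be $f(x)=0$ for $|x|\ge1$, $f(x)=(1+x)/\varepsilon$ on $[-1,-1+\varepsilon]$, $f(x)=1$ on $[-1+\varepsilon,1-\varepsilon]$, $f(x)=(1-x)/\varepsilon$ on $[1-\varepsilon,1]$. For $v\in V$, $h,t\in\mathbb{R}$ let $m_{v,h,t}(h')=\min(\tau(v)-t,\varepsilon/2)f(h'-h)+t$ if $\tau(v)\ge t$, and $m_{v,h,t}(h')=t$ if $\tau(v)<t$. On input $\varphi\in\mathbb{R}^V$ the algorithm outputs an ordering $P_1,\dots,P_{|V|}$ of $V$, numbers $s_k$ and functions $\tau_k:V\times\mathbb{R}\to\mathbb{R}$: set $\tau_1(v,h)=\tau(v)$; for $k=1,\dots,|V|$: let $P_k$ be the vertex $v\in V\setminus\{P_1,\dots,P_{k-1}\}$ minimizing $\tau_k(v,\varphi_v)$ (ties broken by taking the $\preceq$-smallest); set $s_k=\tau_k(P_k,\varphi_{P_k})$; if $k<|V|$ set $\tau_{k+1}(v,h)=\tau_k(v,h)$ if $v\in\{P_1,\dots,P_k\}$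 or $v\not\sim P_k$, and $\tau_{k+1}(v,h)=\min(\tau_k(v,h),m_{v,\varphi_{P_k},s_k}(h))$ otherwise. Define $T^+(\varphi)_{P_k}=\varphi_{P_k}+s_k$ ($1\le k\le|V|$) and $T^-(\varphi)=2\varphi-T^+(\varphi)$. *)

From mathcomp Require Import all_boot.
From Stdlib Require Import Reals.
Set Implicit Arguments. Unset Strict Implicit. Unset Printing Implicit Defensive.

Local Open Scope R_scope.

Definition Rltb (a b : R) : bool := if Rlt_dec a b then true else false.
Definition Reqb (a b : R) : bool := if Req_EM_T a b then true else false.

Definition fA (eps x : R) : R :=
  if Rle_dec 1 (Rabs x) then 0
  else if Rle_dec x (-1 + eps) then (1 + x) / eps
  else if Rle_dec x (1 - eps) then 1
  else (1 - x) / eps.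

Definition mA (V : Type) (tau : V -> R) (eps : R) (v : V) (h t h' : R) : R :=
  if Rle_dec t (tau v) then Rmin (tau v - t) (eps / 2) * fA eps (h' - h) + t
  else t.

(* State of the algorithm after k steps:
   placed = [P_1; ...; P_k] (in reverse order of placement),
   taus   = tau_{k+1},
   sv     = the function P_j |-> s_j on placed vertices (0 elsewhere). *)
Record stateA (V : finType) := StateA {
  placed : seq V;
  taus : V -> R -> R;
  sv : V -> R
}.

Section Alg.
Variables (V : finType) (adj : rel V) (tau : V -> R) (eps : R) (le : rel V)
          (phi : V -> R).

Definition is_next (st : stateA V) (v : V) : bool :=
  (v \notin placed st) &&
  [forall w, (w \notin placed st) ==>
     (Rltb (taus st v (phi v)) (taus st w (phi w))
      || (Reqb (taus st v (phi v)) (taus st w (phi w)) && le v w))].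

Definition stepA (st : stateA V) : stateA V :=
  match [pick v | is_next st v] with
  | None => st
  | Some p =>
      let s := taus st p (phi p) in
      let pl := p :: placed st in
      StateA pl
        (fun v h => if (v \in pl) || ~~ adj v p then taus st v h
                    else Rmin (taus st v h) (mA tau eps v (phi p) s h))
        (fun w => if w == p then s else sv st w)
  end.

Definition initA : stateA V := StateA [::] (fun v _ => tau v) (fun _ => 0).

Definition runA : stateA V := iter #|V| stepA initA.

End Alg.

Definition Tplus (V : finType) (adj : rel V) (tau : V -> R) (eps : R) (le : rel V)
  (phi : V -> R) : V -> R :=
  fun v => phi v + sv (runA adj tau eps le phi) v.

Definition Tminus (V : finType) (adj : rel V) (tau : V -> R) (eps : R) (le : rel V)
  (phi : V -> R) : V -> R :=
  fun v => 2 * phi v - Tplus adj tau eps le phi v.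

(* Each profile tau_k(v, .) takes values in [0, tau v] and is 1/2-Lipschitz, so
   h |-> h + tau_k(v, h) is an increasing bijection of R.  Along a run the selected
   values s_1 <= s_2 <= ... increase, because at each step a profile either stays
   unchanged or rises above the current value.  Hence the run on phi can be replayed
   from psi = T^+(phi) alone: at step k give every unplaced w the unique height h with
   h + tau_k(w, h) = psi_w.  The vertex selected at step k is the same, with the same
   value, because an unplaced w whose replayed height differs from phi_w has a value
   above s_k.  Conversely, running with these replayed heights on an arbitrary psi and
   setting phi = psi - s yields a preimage of psi.  The formula for T^- is the mirror
   symmetry f(-x) = f(x) of the bump: the run on -phi is the reflection of the run on phi. *)

From mathcomp Require Import all_boot.
From Stdlib Require Import Reals Lra ClassicalEpsilon FunctionalExtensionality.
Set Implicit Arguments. Unset Strict Implicit.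
Local Open Scope R_scope.

Lemma fA_closed eps x : 0 < eps <= 1 ->
  fA eps x = Rmax 0 (Rmin eps (1 - Rabs x)) / eps.
Proof.
move=> eps_range; rewrite /fA /Rmax /Rmin /Rabs.
repeat destruct Rle_dec; repeat destruct Rcase_abs => /=; try (exfalso; lra).
all: try (have -> : x = -1 by lra); try (have -> : x = 1 by lra);
     try (have -> : x = -1 + eps by lra); field; lra.
Qed.

Lemma Rmin_lipschitz a b c d :
  Rabs (Rmin a b - Rmin c d) <= Rmax (Rabs (a - c)) (Rabs (b - d)).
Proof.
rewrite /Rmin /Rmax; repeat destruct Rle_dec; unfold Rabs in *;
  repeat destruct Rcase_abs; lra.
Qed.

Lemma tent_lipschitz eps x y :
  Rabs (Rmax 0 (Rmin eps (1 - Rabs x)) - Rmax 0 (Rmin eps (1 - Rabs y))) <= Rabs (x - y).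
Proof.
rewrite /Rmin /Rmax; repeat destruct Rle_dec; unfold Rabs in *;
  repeat destruct Rcase_abs; lra.
Qed.

Section Bump.
Variables (V : Type) (tau : V -> R) (eps : R).
Hypothesis eps_range : 0 < eps <= 1.

Lemma fA_ge0 x : 0 <= fA eps x.
Proof.
rewrite fA_closed //; apply: Rmult_le_pos; last by apply/Rlt_le/Rinv_0_lt_compat; lra.
by apply: Rmax_l.
Qed.

Lemma fA_opp x : fA eps (- x) = fA eps x.
Proof. by rewrite !fA_closed // Rabs_Ropp. Qed.

Lemma mA_ge v h t x : t <= mA tau eps v h t x.
Proof.
rewrite /mA; case: Rle_dec => /= [le_t|_]; last lra.
have : 0 <= Rmin (tau v - t) (eps / 2) by rewrite /Rmin; case: Rle_dec; lra.
have := fA_ge0 (x - h); nra.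
Qed.

Lemma mA_lipschitz v h t x y :
  Rabs (mA tau eps v h t x - mA tau eps v h t y) <= Rabs (x - y) / 2.
Proof.
rewrite /mA; case: Rle_dec => [le_t | _] /=; last first.
  by rewrite Rminus_diag Rabs_R0; have := Rabs_pos (x - y); lra.
rewrite !fA_closed //.
set c := Rmin _ _.
have c_range : 0 <= c <= eps / 2 by rewrite /c /Rmin; case: Rle_dec; lra.
have := tent_lipschitz eps (x - h) (y - h).
set fx := Rmax 0 _; set fy := Rmax 0 _.
have -> : x - h - (y - h) = x - y by ring.
have -> : c * (fx / eps) + t - (c * (fy / eps) + t) = (c / eps) * (fx - fy)
  by field; lra.
set k := c / eps.
have k_range : 0 <= k <= 1 / 2.
  have c_eq : c = k * eps by rewrite /k; field; lra.
  nra.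
rewrite Rabs_mult (Rabs_pos_eq k); last lra.
have := Rabs_pos (fx - fy); nra.
Qed.

Lemma mA_opp v h t x : mA tau eps v (- h) t (- x) = mA tau eps v h t x.
Proof.
rewrite /mA; case: Rle_dec => //= _.
by rewrite -fA_opp; congr (_ * fA eps _ + _); ring.
Qed.

End Bump.

Lemma RltbP a b : reflect (a < b) (Rltb a b).
Proof. by rewrite /Rltb; case: Rlt_dec => h; constructor. Qed.

Lemma ReqbP a b : reflect (a = b) (Reqb a b).
Proof. by rewrite /Reqb; case: Req_EM_T => h; constructor. Qed.

Lemma exists_notin (T : finType) (s : seq T) :
  uniq s -> (size s < #|T|)%nat -> exists v, v \notin s.
Proof.
move=> s_uniq lt_s; case: (pickP [pred v | v \notin s]) => [v | all_in]; first by exists v.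
have s_full : mem s =i predT by move=> v; have := all_in v; rewrite /= => /negbFE.
by move: lt_s; rewrite -(card_uniqP s_uniq) (eq_cardT s_full) -cardE ltnn.
Qed.

Section Selection.
Variables (V : finType) (le : rel V).
Hypotheses (le_refl : reflexive le) (le_anti : antisymmetric le)
  (le_trans : transitive le) (le_total : total le).

Definition lexle (key : V -> R) : rel V :=
  fun p w => Rltb (key p) (key w) || Reqb (key p) (key w) && le p w.

Lemma lexleP key p w :
  reflect (key p < key w \/ key p = key w /\ le p w) (lexle key p w).
Proof.
apply: (iffP orP) => [[/RltbP | /andP[/ReqbP E lepw]] | [lt | [E lepw]]].
- by left.
- by right.
- by left; apply/RltbP.
- by right; rewrite lepw andbT; apply/ReqbP.
Qed.

Lemma lexle_key key p w : lexle key p w -> key p <= key w.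
Proof. by case/lexleP => [| []]; lra. Qed.

Lemma lexle_refl key : reflexive (lexle key).
Proof. by move=> p; apply/lexleP; right. Qed.

Lemma lexle_total key : total (lexle key).
Proof.
move=> p w; apply/orP.
case: (Rtotal_order (key p) (key w)) => [lt | [E | gt]].
- by left; apply/lexleP; left.
- by case/orP: (le_total p w) => le_pw; [left | right]; apply/lexleP; right.
- by right; apply/lexleP; left.
Qed.

Lemma lexle_trans key : transitive (lexle key).
Proof.
move=> q p w /lexleP pq /lexleP qw; apply/lexleP.
case: pq qw => [lt | [E le_pq]] [lt' | [E' le_qw]]; try (left; lra).
by right; split; [lra | exact: le_trans le_qw].
Qed.

Lemma lexle_anti key p w : lexle key p w -> lexle key w p -> p = w.
Proof.
move=> /lexleP [lt | [E lepw]] /lexleP [lt' | [E' lewp]]; try lra.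
by apply: le_anti; rewrite lepw lewp.
Qed.

Lemma is_nextP h (S : stateA V) p :
  reflect (p \notin placed S /\
           forall w, w \notin placed S -> lexle (fun v => taus S v (h v)) p w)
          (is_next le h S p).
Proof.
apply: (iffP andP) => [[notin /forallP lep] | [notin lep]]; split => //.
- by move=> w notin_w; exact: implyP (lep w) notin_w.
- by apply/forallP => w; apply/implyP; exact: lep.
Qed.

Lemma is_next_uniq h S p q : is_next le h S p -> is_next le h S q -> p = q.
Proof.
move=> /is_nextP[p_notin lep] /is_nextP[q_notin leq].
by apply: lexle_anti; [exact: lep | exact: leq].
Qed.

Lemma exists_is_next h S : uniq (placed S) -> (size (placed S) < #|V|)%nat ->
  exists p, is_next le h S p.
Proof.
move=> /exists_notin/[apply] [[v v_notin]].
set key := fun v => taus S v (h v).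
set s := sort (lexle key) [seq w <- enum V | w \notin placed S].
have mem_s w : (w \in s) = (w \notin placed S) by rewrite mem_sort mem_filter mem_enum andbT.
have : v \in s by rewrite mem_s.
case E : s => [// | p s'] _.
have sorted_s : sorted (lexle key) (p :: s') by rewrite -E sort_sorted //; exact: lexle_total.
have p_min := order_path_min (@lexle_trans key) sorted_s.
exists p; apply/is_nextP; split; first by rewrite -mem_s E mem_head.
move=> w; rewrite -mem_s E in_cons => /orP[/eqP -> | w_in]; first exact: lexle_refl.
exact: (allP p_min).
Qed.

End Selection.

Lemma mem_full (T : finType) (s : seq T) : uniq s -> size s = #|T| -> forall v, v \in s.
Proof.
move=> s_uniq size_s v; apply/negPn/negP => v_notin.
have := max_card (mem (v :: s)).
by rewrite (card_uniqP _) /= ?v_notin // size_s ltnn.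
Qed.

Section Algorithm.
Variables (V : finType) (adj : rel V) (tau : V -> R) (eps : R) (le : rel V).
Hypotheses (tau_ge0 : forall v, 0 <= tau v) (eps_range : 0 < eps <= 1).
Hypotheses (le_refl : reflexive le) (le_anti : antisymmetric le)
  (le_trans : transitive le) (le_total : total le).

Local Notation step := (stepA adj tau eps le).

Definition place (h : V -> R) (S : stateA V) (p : V) : stateA V :=
  StateA (p :: placed S)
    (fun v x => if (v \in p :: placed S) || ~~ adj v p then taus S v x
                else Rmin (taus S v x) (mA tau eps v (h p) (taus S p (h p)) x))
    (fun w => if w == p then taus S p (h p) else sv S w).

Lemma step_place h S p : is_next le h S p -> step h S = place h S p.
Proof.
move=> p_next; rewrite /stepA; case: pickP => [q q_next | no_next].
- by rewrite (is_next_uniq le_anti q_next p_next).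
- by move: (no_next p); rewrite p_next.
Qed.

Lemma step_stuck h S : (forall p, ~~ is_next le h S p) -> step h S = S.
Proof.
by move=> no_next; rewrite /stepA; case: pickP => // q; rewrite (negbTE (no_next q)).
Qed.

Lemma place_ext h h' S p : h p = h' p -> place h S p = place h' S p.
Proof. by move=> E; rewrite /place E. Qed.

Lemma taus_place_le h S p v x : taus (place h S p) v x <= taus S v x.
Proof. by rewrite /=; case: ifP => _; [lra | apply: Rmin_l]. Qed.

Lemma taus_place_cases h S p v x :
  taus (place h S p) v x = taus S v x \/ taus S p (h p) <= taus (place h S p) v x.
Proof.
rewrite /=; case: ifP => _; first by left.
have := mA_ge tau eps_range v (h p) (taus S p (h p)) x.
by rewrite /Rmin; case: Rle_dec => _; [left | right].
Qed.

Definition admissible (S : stateA V) : Prop :=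
  (forall v x, 0 <= taus S v x <= tau v) /\
  (forall v x y, Rabs (taus S v x - taus S v y) <= Rabs (x - y) / 2).

Lemma admissible_init : admissible (initA tau).
Proof.
split=> v x /=; first by have := tau_ge0 v; lra.
by move=> y; rewrite Rminus_diag Rabs_R0; have := Rabs_pos (x - y); lra.
Qed.

Lemma admissible_place h S p : admissible S -> admissible (place h S p).
Proof.
move=> [bounds lip]; split=> v x /=; case: ifP => _; try exact: bounds; try exact: lip.
- have := mA_ge tau eps_range v (h p) (taus S p (h p)) x.
  have := bounds p (h p); have := bounds v x.
  by rewrite /Rmin; case: Rle_dec; lra.
- move=> y; apply: Rle_trans (Rmin_lipschitz _ _ _ _) _.
  by rewrite /Rmax; case: Rle_dec => _; [apply: mA_lipschitz | apply: lip].
Qed.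

Lemma admissible_step h S : admissible S -> admissible (step h S).
Proof.
move=> adm_S; case: (pickP (is_next le h S)) => [p p_next | no_next].
- by rewrite (step_place p_next); exact: admissible_place.
- by rewrite step_stuck // => p; rewrite no_next.
Qed.

Lemma shift_le_inv S v x y :
  admissible S -> x + taus S v x <= y + taus S v y -> x <= y.
Proof.
move=> [_ lip] le_xy; have := lip v x y.
by rewrite /Rabs; repeat case: Rcase_abs; lra.
Qed.

Lemma shift_inj S v x y :
  admissible S -> x + taus S v x = y + taus S v y -> x = y.
Proof. by move=> adm E; apply: Rle_antisym; apply: (shift_le_inv (v := v) adm); lra. Qed.

Lemma shift_surj S v c : admissible S -> exists x, x + taus S v x = c.
Proof.
move=> [bounds lip].
have shift_cont : continuity (fun x => x + taus S v x - c).
  move=> x0 e e_pos; exists (e / 2); split=> [| x [_ near_x]]; first lra.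
  move: near_x; rewrite /= /R_dist; have := lip v x x0.
  by rewrite /Rabs; repeat case: Rcase_abs; lra.
have [x [_ root_x]] := IVT _ (c - tau v - 1) (c + 1) shift_cont
  ltac:(have := tau_ge0 v; lra)
  ltac:(have := bounds v (c - tau v - 1); lra)
  ltac:(have := bounds v (c + 1); lra).
by exists x; lra.
Qed.

Definition unshift (psi : V -> R) (S : stateA V) (v : V) : R :=
  epsilon (inhabits 0) (fun x => x + taus S v x = psi v).

Lemma unshiftK psi S v :
  admissible S -> unshift psi S v + taus S v (unshift psi S v) = psi v.
Proof.
by move=> adm; apply: (epsilon_spec (inhabits 0) (fun x => x + taus S v x = psi v)); exact: shift_surj.
Qed.

Lemma unshift_unique psi S v x :
  admissible S -> x + taus S v x = psi v -> x = unshift psi S v.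
Proof. by move=> adm E; apply: (shift_inj (v := v) adm); rewrite E unshiftK. Qed.

Lemma is_next_transfer h h' S p : is_next le h S p -> h' p = h p ->
  (forall w, w \notin placed S -> taus S p (h p) < taus S w (h' w) \/ h' w = h w) ->
  is_next le h' S p.
Proof.
move=> /is_nextP[p_notin p_min] hp h'_alt; apply/is_nextP; split=> // w w_notin.
case: (h'_alt w w_notin) => [lt | hw]; first by apply/lexleP; left; rewrite /= hp.
by rewrite /lexle hp hw; exact: p_min.
Qed.

Definition run_with (Phi : stateA V -> V -> R) (k : nat) : stateA V :=
  iter k (fun S => step (Phi S) S) (initA tau).

Lemma runA_run_with phi : runA adj tau eps le phi = run_with (fun _ => phi) #|V|.
Proof. by []. Qed.

Section Policy.
Variable Phi : stateA V -> V -> R.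
Local Notation S_ k := (run_with Phi k).

Lemma run_withS k : S_ k.+1 = step (Phi (S_ k)) (S_ k).
Proof. by []. Qed.

Lemma admissible_run k : admissible (S_ k).
Proof. by elim: k => [| k IH]; [exact: admissible_init | exact: admissible_step]. Qed.

Lemma placed_run k : (k <= #|V|)%nat ->
  uniq (placed (S_ k)) /\ size (placed (S_ k)) = k.
Proof.
elim: k => [// | k IH] lt_k; have [uniq_k size_k] := IH (ltnW lt_k).
have [p p_next] : exists p, is_next le (Phi (S_ k)) (S_ k) p.
  by apply: exists_is_next; rewrite ?size_k.
have /is_nextP[p_notin _] := p_next.
by rewrite run_withS (step_place p_next) /= p_notin uniq_k size_k.
Qed.

Lemma run_next k : (k < #|V|)%nat ->
  exists2 p, is_next le (Phi (S_ k)) (S_ k) p & S_ k.+1 = place (Phi (S_ k)) (S_ k) p.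
Proof.
move=> lt_k; have [uniq_k size_k] := placed_run (ltnW lt_k).
have [p p_next] : exists p, is_next le (Phi (S_ k)) (S_ k) p.
  by apply: exists_is_next; rewrite ?size_k.
by exists p; rewrite // run_withS (step_place p_next).
Qed.

Lemma run_mono k n :
  [/\ {subset placed (S_ k) <= placed (S_ (k + n))},
      forall w, w \in placed (S_ k) -> sv (S_ (k + n)) w = sv (S_ k) w
    & forall v x, taus (S_ (k + n)) v x <= taus (S_ k) v x].
Proof.
elim: n => [| n [sub_n sv_n taus_n]]; first by rewrite addn0; split=> // *; lra.
rewrite addnS run_withS; set S := S_ (k + n).
case: (pickP (is_next le (Phi S) S)) => [p p_next | no_next]; last first.
  by rewrite step_stuck // => p; rewrite no_next.
have /is_nextP[p_notin _] := p_next.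
rewrite (step_place p_next); split=> [w w_in | w w_in | v x].
- by rewrite /= in_cons sub_n ?orbT.
- rewrite /= -sv_n //; case: eqP => // E.
  by move: p_notin; rewrite -E sub_n.
- exact: Rle_trans (taus_place_le _ _ _ _ _) (taus_n v x).
Qed.

Lemma sv_run_final k p : (k < #|V|)%nat -> is_next le (Phi (S_ k)) (S_ k) p ->
  sv (S_ #|V|) p = taus (S_ k) p (Phi (S_ k) p).
Proof.
move=> lt_k p_next; have [q q_next S_kS] := run_next lt_k.
rewrite (is_next_uniq le_anti q_next p_next) in S_kS.
have [_ sv_final _] := run_mono k.+1 (#|V| - k.+1).
by rewrite subnKC // in sv_final; rewrite sv_final S_kS /= ?eqxx ?mem_head.
Qed.

Lemma next_later k w : (k <= #|V|)%nat -> w \notin placed (S_ k) ->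
  exists j, [/\ (k <= j)%nat, (j < #|V|)%nat & is_next le (Phi (S_ j)) (S_ j) w].
Proof.
move=> /subnKC; move: (#|V| - k)%nat => n.
elim: n k => [| n IH] k size_eq w_notin.
  have [uniq_V size_V] := placed_run (leqnn #|V|).
  by rewrite addn0 in size_eq; rewrite size_eq (mem_full uniq_V size_V) in w_notin.
have lt_k : (k < #|V|)%nat by rewrite -size_eq -addSnnS leq_addr.
have [p p_next S_kS] := run_next lt_k.
case: (eqVneq w p) => [-> | neq_wp]; first by exists k.
have w_notin' : w \notin placed (S_ k.+1) by rewrite S_kS /= in_cons negb_or neq_wp.
have size_eq' : (k.+1 + n = #|V|)%nat by rewrite addSnnS.
have [j [le_j lt_j j_next]] := IH k.+1 size_eq' w_notin'.
by exists j; split=> //; exact: ltnW.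
Qed.

Definition heights_stable : Prop :=
  forall k u, (k < #|V|)%nat ->
    taus (S_ k.+1) u (Phi (S_ k.+1) u) = taus (S_ k) u (Phi (S_ k.+1) u) ->
    Phi (S_ k.+1) u = Phi (S_ k) u.

Hypothesis Phi_stable : heights_stable.

Definition values_above k a : Prop :=
  forall u, u \notin placed (S_ k) -> a <= taus (S_ k) u (Phi (S_ k) u).

Lemma values_above_step k a : (k < #|V|)%nat -> values_above k a -> values_above k.+1 a.
Proof.
move=> lt_k above_k u u_notin'; have [p p_next S_kS] := run_next lt_k.
have u_notin : u \notin placed (S_ k).
  by move: u_notin'; rewrite S_kS /= in_cons negb_or => /andP[].
have /is_nextP[p_notin _] := p_next.
case: (taus_place_cases (Phi (S_ k)) (S_ k) p u (Phi (S_ k.+1) u)); rewrite -S_kS.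
- move=> same_taus; rewrite same_taus (Phi_stable lt_k same_taus).
  exact: above_k.
- by have := above_k p p_notin; lra.
Qed.

Lemma values_above_mono k n a : (k + n <= #|V|)%nat ->
  values_above k a -> values_above (k + n) a.
Proof.
elim: n => [| n IH] le_kn above_k; first by rewrite addn0.
rewrite addnS; apply: values_above_step; first by rewrite -addnS.
by apply: IH => //; rewrite ltnW // -addnS.
Qed.

Lemma later_value_bounds k p w : (k < #|V|)%nat -> is_next le (Phi (S_ k)) (S_ k) p ->
  w \notin placed (S_ k) ->
  exists j, [/\ sv (S_ #|V|) w = taus (S_ j) w (Phi (S_ j) w),
    taus (S_ k) p (Phi (S_ k) p) <= taus (S_ j) w (Phi (S_ j) w)
    & taus (S_ j) w (Phi (S_ j) w) <= taus (S_ k) w (Phi (S_ j) w)].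
Proof.
move=> lt_k p_next w_notin.
have [j [le_kj lt_j w_next]] := next_later (ltnW lt_k) w_notin.
exists j; split; first exact: sv_run_final.
- have /is_nextP[_ p_min] := p_next; have /is_nextP[w_notin_j _] := w_next.
  have above_k : values_above k (taus (S_ k) p (Phi (S_ k) p)).
    by move=> u /p_min /lexle_key.
  have := values_above_mono (n := j - k) _ above_k; rewrite subnKC //.
  by move=> /(_ (ltnW lt_j)); apply.
- by have [_ _] := run_mono k (j - k); rewrite subnKC //; apply.
Qed.

End Policy.

Lemma run_with_agree Phi Phi' :
  (forall k p, (k < #|V|)%nat ->
     let S := run_with Phi k in
     is_next le (Phi S) S p -> is_next le (Phi' S) S p /\ Phi' S p = Phi S p) ->
  forall k, (k <= #|V|)%nat -> run_with Phi' k = run_with Phi k.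
Proof.
move=> agree; elim=> [// | k IH] lt_k; have [p p_next S_kS] := run_next Phi lt_k.
have [p_next' same_p] := agree k p lt_k p_next.
rewrite run_withS IH; last exact: ltnW.
by rewrite (step_place p_next') S_kS; exact: place_ext.
Qed.

Lemma const_stable phi : heights_stable (fun _ => phi).
Proof. by move=> *. Qed.

Lemma unshift_stable psi : heights_stable (unshift psi).
Proof.
move=> k u _ same_taus; apply: unshift_unique; first exact: admissible_run.
by rewrite -same_taus unshiftK //; exact: admissible_run.
Qed.

Lemma run_replay phi chi : chi =1 Tplus adj tau eps le phi ->
  forall k, (k <= #|V|)%nat -> run_with (unshift chi) k = run_with (fun _ => phi) k.
Proof.
move=> chi_eq; apply: run_with_agree => k p lt_k /= p_next.
have adm := admissible_run (fun _ => phi) k.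
have out_eq w : chi w = phi w + sv (run_with (fun _ => phi) #|V|) w by rewrite chi_eq.
have p_eq : unshift chi (run_with (fun _ => phi) k) p = phi p.
  by symmetry; apply: unshift_unique => //; rewrite out_eq (sv_run_final lt_k p_next).
split=> //; apply: (is_next_transfer p_next p_eq) => w w_notin.
have [j [s_w lo hi]] := later_value_bounds (@const_stable phi) lt_k p_next w_notin.
have y_eq := unshiftK chi w adm; rewrite out_eq s_w in y_eq.
set y := unshift chi _ w in y_eq *.
have y_le : y <= phi w by apply: (shift_le_inv (v := w) adm); lra.
have [lt | ge] := Rlt_or_le (taus (run_with (fun _ => phi) k) p (phi p))
                            (taus (run_with (fun _ => phi) k) w y).
  by left.
by right; apply: Rle_antisym y_le _; lra.
Qed.

Definition Tplus_inv (psi : V -> R) : V -> R :=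
  fun v => psi v - sv (run_with (unshift psi) #|V|) v.

Lemma run_Tplus_inv psi k : (k <= #|V|)%nat ->
  run_with (fun _ => Tplus_inv psi) k = run_with (unshift psi) k.
Proof.
move: k; apply: run_with_agree => k p lt_k /= p_next.
have inv_eq w j : sv (run_with (unshift psi) #|V|) w =
      taus (run_with (unshift psi) j) w (unshift psi (run_with (unshift psi) j) w) ->
    Tplus_inv psi w = unshift psi (run_with (unshift psi) j) w.
  move=> s_w; rewrite /Tplus_inv s_w.
  by have := unshiftK psi w (admissible_run (unshift psi) j); lra.
split; last exact/inv_eq/sv_run_final.
apply: (is_next_transfer p_next (inv_eq _ _ (sv_run_final lt_k p_next))) => w w_notin.
have [j [s_w lo hi]] := later_value_bounds (@unshift_stable psi) lt_k p_next w_notin.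
rewrite -(inv_eq w j s_w) in lo hi.
have [lt | ge] := Rlt_or_le (taus (run_with (unshift psi) k) p
                               (unshift psi (run_with (unshift psi) k) p))
                            (taus (run_with (unshift psi) k) w (Tplus_inv psi w)).
  by left.
right; apply: unshift_unique; first exact: admissible_run.
have := unshiftK psi w (admissible_run (unshift psi) j); rewrite -(inv_eq w j s_w).
lra.
Qed.

Lemma Tplus_inj phi psi :
  Tplus adj tau eps le phi =1 Tplus adj tau eps le psi -> phi =1 psi.
Proof.
move=> E v; have := E v; rewrite /Tplus !runA_run_with.
by rewrite -(run_replay (frefl _) (leqnn _)) -(run_replay E (leqnn _)); lra.
Qed.

Lemma Tplus_Tplus_inv psi : Tplus adj tau eps le (Tplus_inv psi) =1 psi.
Proof. by move=> v; rewrite /Tplus runA_run_with run_Tplus_inv // /Tplus_inv; lra. Qed.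

Definition mirror (S : stateA V) : stateA V :=
  StateA (placed S) (fun v x => taus S v (- x)) (sv S).

Lemma is_next_mirror h S p :
  is_next le (fun v => - h v) (mirror S) p = is_next le h S p.
Proof.
by congr andb; apply: eq_forallb => w; rewrite /= !Ropp_involutive.
Qed.

Lemma step_mirror h S : step (fun v => - h v) (mirror S) = mirror (step h S).
Proof.
case: (pickP (is_next le h S)) => [p p_next | no_next]; last first.
  by rewrite !step_stuck // => p; rewrite ?is_next_mirror no_next.
have p_next' : is_next le (fun v => - h v) (mirror S) p by rewrite is_next_mirror.
rewrite (step_place p_next) (step_place p_next') /place /mirror /= Ropp_involutive.
congr StateA; apply: functional_extensionality => v; apply: functional_extensionality => x.
by case: ifP => // _; rewrite -(mA_opp tau eps_range v (h p)) Ropp_involutive.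
Qed.

Lemma run_opp phi k :
  run_with (fun _ v => - phi v) k = mirror (run_with (fun _ => phi) k).
Proof. by elim: k => [// | k IH]; rewrite run_withS IH step_mirror. Qed.

Lemma Tminus_opp phi :
  Tminus adj tau eps le phi =1 (fun v => - Tplus adj tau eps le (fun w => - phi w) v).
Proof. by move=> v; rewrite /Tminus /Tplus !runA_run_with run_opp /=; lra. Qed.

Lemma Tminus_inj phi psi :
  Tminus adj tau eps le phi =1 Tminus adj tau eps le psi -> phi =1 psi.
Proof.
move=> E v; suff opp_eq : (fun w => - phi w) =1 (fun w => - psi w).
  by have := opp_eq v; lra.
by apply: Tplus_inj => w; have := E w; rewrite !Tminus_opp; lra.
Qed.

Lemma Tminus_surj psi : exists phi, Tminus adj tau eps le phi =1 psi.
Proof.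
exists (fun v => - Tplus_inv (fun w => - psi w) v) => v; rewrite Tminus_opp.
have -> : (fun w => - - Tplus_inv (fun w => - psi w) w) = Tplus_inv (fun w => - psi w).
  by apply: functional_extensionality => w; rewrite Ropp_involutive.
by rewrite Tplus_Tplus_inv; lra.
Qed.

End Algorithm.

Theorem mainTheorem7 (V : finType) (adj : rel V) (tau : V -> R) (eps : R) (le : rel V)
  (adj_sym : symmetric adj) (adj_irr : irreflexive adj)
  (adj_conn : forall x y : V, connect adj x y)
  (tau_nonneg : forall v, 0 <= tau v)
  (eps_pos : 0 < eps) (eps_le : eps <= 1 / 2)
  (le_refl : reflexive le) (le_anti : antisymmetric le)
  (le_trans : transitive le) (le_total : total le) :
  ((forall phi psi : V -> R,
      Tplus adj tau eps le phi =1 Tplus adj tau eps le psi -> phi =1 psi) /\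
   (forall psi : V -> R, exists phi : V -> R, Tplus adj tau eps le phi =1 psi)) /\
  ((forall phi psi : V -> R,
      Tminus adj tau eps le phi =1 Tminus adj tau eps le psi -> phi =1 psi) /\
   (forall psi : V -> R, exists phi : V -> R, Tminus adj tau eps le phi =1 psi)) /\
  (forall phi : V -> R,
      Tminus adj tau eps le phi =1 (fun v => - Tplus adj tau eps le (fun w => - phi w) v)).
Proof.
have eps_range : 0 < eps <= 1 by lra.
split; [split | split; [split |]].
- exact: Tplus_inj.
- by move=> psi; exists (Tplus_inv adj tau eps le psi); exact: Tplus_Tplus_inv.
- exact: Tminus_inj.
- exact: Tminus_surj.
- exact: Tminus_opp.
Qed.
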